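(* Let $X$ be a represented space, let $Y$ be a computable metric space and let $f:X\to Y$ be a single-valued (total) function. If there is a multi-valued function $g$ (not necessarily computable) with values in $\mathrm{Tr}$ such that $f\le_W\tfrac12\text{-}\mathsf{WWKL}\circ g$, then $f$ is computable.
   Context: A represented space is a pair $(X,\delta_X)$ with $\delta_X:\subseteq\mathbb{N}^\mathbb{N}\to X$ a partial surjection; a computable metric space is represented by its Cauchy representation. A realizer of $f:\subseteq X\rightrightarrows Y$ is a partial $F$ with $\delta_Y F(p)\in f(\delta_X(p))$ for all $p\in\mathrm{dom}(f\circ\delta_X)$; $f$ is computable if it has a computable realizer. $f\le_W g$ if there are computable partial $H,K:\subseteq\mathbb{N}^\mathbb{N}\to\mathbb{N}^\mathbb{N}$ such that $p\mapsto H\langle p,GK(p)\rangle$ realizes $f$ for every realizer $G$ of $g$. Composition of multi-valued functions: $(h\circ g)(x)=\{z:\exists y\in g(x),\ z\in h(y)\}$ with $\mathrm{dom}(h\circ g)=\{x:g(x)\subseteq\mathrm{dom}(h)\}$. $\mathrm{Tr}$ is the set of binary trees $T\subseteq\{0,1\}^*$, represented by characteristic functions; $[T]$ its set of infinite paths; $\mu$ the uniform measure on $2^\mathbb N$ ($\mu(w2^\mathbb N)=2^{-|w|}$). $\tfrac12\text{-}\mathsf{WWKL}:\subseteq\mathrm{Tr}\rightrightarrows2^\mathbb N$, $T\mapsto[T]$, with domain $\{T:\mu([T])>\tfrac12\}$. *)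

From Stdlib Require Import Reals List PArith Arith.
Open Scope R_scope.

Inductive recf : Type :=
| RZero : recf
| RSucc : recf
| RProj : nat -> recf
| RComp : recf -> list recf -> recf
| RPrec : recf -> recf -> recf
| RMin  : recf -> recf.

Inductive eval : recf -> list nat -> nat -> Prop :=
| ev_zero xs : eval RZero xs 0
| ev_succ x xs : eval RSucc (x :: xs) (S x)
| ev_proj i xs : eval (RProj i) xs (nth i xs 0%nat)
| ev_comp f gs xs ys y : eval_list gs xs ys -> eval f ys y -> eval (RComp f gs) xs y
| ev_prec0 f g xs y : eval f xs y -> eval (RPrec f g) (0%nat :: xs) y
| ev_precS f g n xs r y : eval (RPrec f g) (n :: xs) r -> eval g (n :: r :: xs) y ->
    eval (RPrec f g) (S n :: xs) y
| ev_min f xs n : eval f (n :: xs) 0%nat ->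
    (forall m, (m < n)%nat -> exists k, eval f (m :: xs) (S k)) -> eval (RMin f) xs n
with eval_list : list recf -> list nat -> list nat -> Prop :=
| evl_nil xs : eval_list nil xs nil
| evl_cons g gs xs y ys : eval g xs y -> eval_list gs xs ys -> eval_list (g :: gs) xs (y :: ys).

Definition npair (a b : nat) : nat := ((a + b) * (a + b + 1) / 2 + b)%nat.

Fixpoint code (l : list nat) : nat :=
  match l with nil => 0%nat | x :: l' => S (npair x (code l')) end.

Definition baire := nat -> nat.

Definition prefix {A : Type} (p : nat -> A) (k : nat) : list A := map p (seq 0 k).

Definition bpair (p q : baire) : baire :=
  fun n => if Nat.even n then p (Nat.div2 n) else q (Nat.div2 n).

Definition machine_computes (e : recf) (p q : baire) : Prop :=
  forall n,
    (exists k, eval e (npair n (code (prefix p k)) :: nil) (S (q n))) /\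
    (forall k v, eval e (npair n (code (prefix p k)) :: nil) (S v) -> v = q n).

Record pfun := { pdom : baire -> Prop ; pval : baire -> baire }.

Definition pcomputable (F : pfun) : Prop :=
  exists e, forall p, pdom F p -> machine_computes e p (pval F p).

Record rep_space := { carrier :> Type ; delta : baire -> carrier -> Prop }.

(** delta is a partial surjection (given as a single-valued relation) *)
Definition is_rep_space (X : rep_space) : Prop :=
  (forall p x y, delta X p x -> delta X p y -> x = y) /\
  (forall x : carrier X, exists p, delta X p x).

Definition mvfun (X Y : rep_space) := carrier X -> carrier Y -> Prop.

Definition mvdom {X Y : rep_space} (f : mvfun X Y) (x : carrier X) : Prop :=
  exists y, f x y.

Definition mvcomp {X Y Z : rep_space} (h : mvfun Y Z) (g : mvfun X Y) : mvfun X Z :=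
  fun x z => (exists y, g x y /\ h y z) /\ (forall y, g x y -> mvdom h y).

Definition realizer {X Y : rep_space} (F : pfun) (f : mvfun X Y) : Prop :=
  forall p x, delta X p x -> mvdom f x ->
    pdom F p /\ exists y, delta Y (pval F p) y /\ f x y.

Definition computable {X Y : rep_space} (f : mvfun X Y) : Prop :=
  exists F, pcomputable F /\ realizer F f.

Definition weihrauch_le {X Y U V : rep_space} (f : mvfun X Y) (g : mvfun U V) : Prop :=
  exists H K : pfun, pcomputable H /\ pcomputable K /\
    forall G : pfun, realizer G g ->
      realizer {| pdom := fun p => pdom K p /\ pdom G (pval K p) /\
                                    pdom H (bpair p (pval G (pval K p)));
                  pval := fun p => pval H (bpair p (pval G (pval K p))) |} f.

Definition sv_mv {X Y : rep_space} (f : carrier X -> carrier Y) : mvfun X Y :=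
  fun x y => y = f x.

Record cmetric := {
  cm_carrier : Type ;
  cm_d : cm_carrier -> cm_carrier -> R ;
  cm_alpha : nat -> cm_carrier
}.

Definition is_computable_metric_space (M : cmetric) : Prop :=
  let d := cm_d M in let a := cm_alpha M in
  (forall x y, 0 <= d x y) /\
  (forall x y, d x y = 0 <-> x = y) /\
  (forall x y, d x y = d y x) /\
  (forall x y z, d x z <= d x y + d y z) /\
  (forall x eps, 0 < eps -> exists i, d (a i) x < eps) /\
  (* d o (alpha x alpha) is computable: uniformly approximable by rationals *)
  (exists e1 e2 : recf, forall i j n, exists u v,
      eval e1 (i :: j :: n :: nil) u /\ eval e2 (i :: j :: n :: nil) v /\
      Rabs (d (a i) (a j) - INR u / (INR v + 1)) <= (/2) ^ n).

Definition cauchy_space (M : cmetric) : rep_space :=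
  {| carrier := cm_carrier M ;
     delta := fun p x =>
       (forall i j, (i < j)%nat -> cm_d M (cm_alpha M (p i)) (cm_alpha M (p j)) <= (/2) ^ i) /\
       (forall eps, 0 < eps -> exists N, forall n, (N <= n)%nat ->
           cm_d M (cm_alpha M (p n)) x < eps) |}.

Fixpoint word_of_pos (q : positive) : list bool :=
  match q with
  | xH => nil
  | xO q' => word_of_pos q' ++ false :: nil
  | xI q' => word_of_pos q' ++ true :: nil
  end.

(** standard enumeration of {0,1}^*: w_n = binary expansion of n+1 without leading 1 *)
Definition word (n : nat) : list bool := word_of_pos (Pos.of_succ_nat n).

Definition is_tree (T : list bool -> bool) : Prop :=
  forall u v, T (u ++ v) = true -> T u = true.

Definition tree := { T : list bool -> bool | is_tree T }.

Definition bit (b : bool) : nat := if b then 1%nat else 0%nat.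

Definition Tr : rep_space :=
  {| carrier := tree ;
     delta := fun p T => forall n, p n = bit (proj1_sig T (word n)) |}.

Definition Cantor : rep_space :=
  {| carrier := nat -> bool ;
     delta := fun p x => forall n, p n = bit (x n) |}.

Definition paths (T : tree) (x : nat -> bool) : Prop :=
  forall n, proj1_sig T (prefix x n) = true.

(** Uniform measure, via the outer measure from cylinders. *)
Definition cyl_covers (c : nat -> option (list bool)) (A : (nat -> bool) -> Prop) : Prop :=
  forall x, A x -> exists i w, c i = Some w /\ prefix x (length w) = w.

Definition cover_weight (c : nat -> option (list bool)) (N : nat) : R :=
  sum_f_R0 (fun i => match c i with Some w => (/2) ^ (length w) | None => 0 end) N.

Definition measure_ge (A : (nat -> bool) -> Prop) (r : R) : Prop :=
  forall c, cyl_covers c A -> forall s, s < r -> exists N, s < cover_weight c N.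

Definition measure_gt (A : (nat -> bool) -> Prop) (r : R) : Prop :=
  exists r', r < r' /\ measure_ge A r'.

Definition WWKL_half : mvfun Tr Cantor :=
  fun T x => measure_gt (paths T) (/2) /\ paths T x.

From Stdlib Require Import Reals List.
From Stdlib Require Import Arith Lia Lra Classical ClassicalDescription IndefiniteDescription.
Import ListNotations.
Open Scope nat_scope.

(** The proof is a majority vote.  Let [p] name [x] and let
  [(H, K)] witness the reduction.  [K p] names some [z] such that every tree
  in [g z] has measure [> 1/2]; fix such a tree [T] (of measure [>= r > 1/2]).
  For every path [q] of [T] some realizer of [1/2-WWKL o g] answers [q] on
  [K p], so [H <p, q>] names [f x].  To compute the [n]-th approximation of
  [f x] we search stages [s], levels [L] and words [w] of length [L]: run [H]
  on [<p, w>] for [s] steps and accept its answer [a] when more than half of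
  the [2^L] words produce answers close to [a].  A majority of words always
  contains a word extended by a path of [T] (as [mu [T] > 1/2]), so accepted
  answers are close to [f x]; and by Koenig's lemma some level [L] works for
  all paths of [T], whose words then form an accepted majority, so the search
  terminates. *)

(** * A loop language compiled to partial recursive functions *)

Inductive expr : Type :=
| EV (i : nat) | EZ | ES (a : expr) | EApp (b : expr) (args : exprs)
| EExt (r : recf) (F : list nat -> nat) (args : exprs)
| ELoop (b i s : expr)
with exprs : Type := ENil | ECons (a : expr) (l : exprs).

Fixpoint loopf (n : nat) (i : nat) (s : nat -> nat -> nat) : nat :=
  match n with 0 => i | S n' => s n' (loopf n' i s) end.

Fixpoint sem (env : list nat) (e : expr) : nat :=
  match e with
  | EV i => nth i env 0
  | EZ => 0
  | ES a => S (sem env a)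
  | EApp b args => sem (seml env args) b
  | EExt r F args => F (seml env args)
  | ELoop b i s => loopf (sem env b) (sem env i) (fun t acc => sem (t :: acc :: env) s)
  end
with seml (env : list nat) (l : exprs) : list nat :=
  match l with ENil => nil | ECons a l => sem env a :: seml env l end.

Fixpoint lenl (l : exprs) : nat := match l with ENil => 0 | ECons _ l => S (lenl l) end.

Fixpoint wf (e : expr) : Prop :=
  match e with
  | EV _ | EZ => True
  | ES a => wf a
  | EApp b args => wf b /\ wfl args
  | EExt r F args => (forall l, length l = lenl args -> eval r l (F l)) /\ wfl args
  | ELoop b i s => wf b /\ wf i /\ wf s
  end
with wfl (l : exprs) : Prop := match l with ENil => True | ECons a l => wf a /\ wfl l end.

Fixpoint comp (n : nat) (e : expr) : recf :=
  match e with
  | EV i => RProj i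
  | EZ => RZero
  | ES a => RComp RSucc [comp n a]
  | EApp b args => RComp (comp (lenl args) b) (compl n args)
  | EExt r F args => RComp r (compl n args)
  | ELoop b i s => RComp (RPrec (comp n i) (comp (S (S n)) s)) (comp n b :: map RProj (seq 0 n))
  end
with compl (n : nat) (l : exprs) : list recf :=
  match l with ENil => nil | ECons a l => comp n a :: compl n l end.

Scheme expr_mut := Induction for expr Sort Prop with exprs_mut := Induction for exprs Sort Prop.

Lemma seml_len env l : length (seml env l) = lenl l.
Proof. induction l; simpl; auto. Qed.

Lemma loopf_ext n i s1 s2 : (forall t acc, s1 t acc = s2 t acc) -> loopf n i s1 = loopf n i s2.
Proof. intros H; induction n; simpl; congruence. Qed.

Lemma loopf_iter n x f : loopf n x (fun _ acc => f acc) = Nat.iter n f x.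
Proof. induction n; simpl; congruence. Qed.

Lemma projs_eval env n k : k + n = length env ->
  eval_list (map RProj (seq k n)) env (skipn k env).
Proof.
  revert k. induction n; intros k Hk; simpl.
  - rewrite skipn_all2 by lia. constructor.
  - assert (Hs : skipn k env = nth k env 0 :: skipn (S k) env).
    { clear IHn. revert k Hk. induction env; intros k Hk; simpl in *; [lia|].
      destruct k; simpl; auto. }
    rewrite Hs. constructor; [constructor|]. apply IHn. lia.
Qed.

Lemma prec_eval f g env i s :
  eval f env i -> (forall t acc, eval g (t :: acc :: env) (s t acc)) ->
  forall n, eval (RPrec f g) (n :: env) (loopf n i s).
Proof. intros Hf Hg n. induction n; simpl; econstructor; eauto. Qed.

Lemma comp_correct e n env : length env = n -> wf e -> eval (comp n e) env (sem env e).
Proof.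
  revert e n env.
  apply (expr_mut (fun e => forall n env, length env = n -> wf e -> eval (comp n e) env (sem env e))
                  (fun l => forall n env, length env = n -> wfl l ->
                              eval_list (compl n l) env (seml env l)));
    simpl; intros.
  - constructor.
  - constructor.
  - econstructor; [constructor; eauto; constructor|constructor].
  - destruct H2. econstructor; [eapply H0; eauto|]. apply H; auto. apply seml_len.
  - destruct H1. econstructor; [eapply H; eauto|]. apply H1. apply seml_len.
  - destruct H3 as [? [? ?]]. econstructor.
    + constructor; [eapply H; eauto|].
      replace env with (skipn 0 env) at 2 by reflexivity. apply projs_eval. lia.
    + apply prec_eval; [eapply H0; eauto|]. intros. apply H1; auto. simpl. lia.
  - constructor.
  - destruct H2. constructor; eauto.
Qed.

Fixpoint el (l : list expr) : exprs := match l with nil => ENil | a :: l => ECons a (el l) end.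

Lemma seml_el env l : seml env (el l) = map (sem env) l.
Proof. induction l; simpl; congruence. Qed.

Lemma wfl_el l : Forall wf l -> wfl (el l).
Proof. induction 1; simpl; auto. Qed.

Definition Pred x := EApp (ELoop (EV 0) EZ (EV 0)) (el [x]).
Definition Add a b := EApp (ELoop (EV 1) (EV 0) (ES (EV 1))) (el [a; b]).
Definition Sub a b := EApp (ELoop (EV 1) (EV 0) (Pred (EV 1))) (el [a; b]).
Definition Mul a b := EApp (ELoop (EV 1) EZ (Add (EV 1) (EV 2))) (el [a; b]).
Fixpoint Lit (c : nat) : expr := match c with 0 => EZ | S c => ES (Lit c) end.
Definition IsZero x := Sub (Lit 1) x.
Definition If c a b := Add (Mul (Sub (Lit 1) (IsZero c)) a) (Mul (IsZero c) b).
Definition Le a b := IsZero (Sub a b).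

Arguments Pred : simpl never. Arguments Add : simpl never. Arguments Sub : simpl never.
Arguments Mul : simpl never. Arguments IsZero : simpl never. Arguments If : simpl never.
Arguments Le : simpl never.

Ltac sem_simpl := cbn [sem seml el nth] in *.

Lemma sem_Pred env x : sem env (Pred x) = pred (sem env x).
Proof. unfold Pred. simpl. destruct (sem env x); reflexivity. Qed.

Lemma sem_Add env a b : sem env (Add a b) = sem env a + sem env b.
Proof. unfold Add. simpl. generalize (sem env b). induction n; simpl; lia. Qed.

Lemma sem_Sub env a b : sem env (Sub a b) = sem env a - sem env b.
Proof.
  unfold Sub. sem_simpl.
  rewrite (loopf_ext _ _ _ (fun _ acc => pred acc)) by (intros; rewrite sem_Pred; reflexivity).
  generalize (sem env b). induction n; simpl; [lia|]. rewrite IHn. lia.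
Qed.

Lemma sem_Mul env a b : sem env (Mul a b) = sem env a * sem env b.
Proof.
  unfold Mul. sem_simpl.
  rewrite (loopf_ext _ _ _ (fun _ acc => acc + sem env a)) by (intros; rewrite sem_Add; reflexivity).
  generalize (sem env b). induction n; simpl; [lia|]. rewrite IHn. lia.
Qed.

Lemma sem_Lit env c : sem env (Lit c) = c.
Proof. induction c; simpl; auto. Qed.

Lemma sem_IsZero env x : sem env (IsZero x) = if sem env x =? 0 then 1 else 0.
Proof. unfold IsZero. rewrite sem_Sub, sem_Lit. destruct (sem env x); reflexivity. Qed.

Lemma sem_If env c a b : sem env (If c a b) = if sem env c =? 0 then sem env b else sem env a.
Proof.
  unfold If. rewrite sem_Add, !sem_Mul, sem_Sub, sem_Lit, sem_IsZero.
  destruct (sem env c); simpl; lia.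
Qed.

Lemma sem_Le env a b : sem env (Le a b) = if sem env a <=? sem env b then 1 else 0.
Proof.
  unfold Le. rewrite sem_IsZero, sem_Sub.
  destruct (Nat.leb_spec (sem env a) (sem env b)).
  - replace (sem env a - sem env b) with 0 by lia. reflexivity.
  - destruct (sem env a - sem env b) eqn:E; [lia|reflexivity].
Qed.

Lemma wf_Lit c : wf (Lit c). Proof. induction c; simpl; auto. Qed.

Definition first_nz (B : nat) (G : nat -> nat) : nat :=
  loopf B 0 (fun t acc => if acc =? 0 then G t else acc).
Definition FirstNZ (bound G : expr) : expr := ELoop bound EZ (If (EV 1) (EV 1) G).

Lemma sem_FirstNZ env b G :
  sem env (FirstNZ b G) = first_nz (sem env b) (fun t => sem (t :: 0 :: env) G).
Proof.
  unfold FirstNZ, first_nz. sem_simpl. apply loopf_ext. intros.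
  rewrite sem_If. sem_simpl. destruct acc; reflexivity.
Qed.

Lemma first_nz_spec B G :
  (first_nz B G = 0 /\ forall t, t < B -> G t = 0) \/
  (exists t, t < B /\ first_nz B G = G t /\ G t <> 0 /\ forall t', t' < t -> G t' = 0).
Proof.
  unfold first_nz. induction B; simpl.
  - left; split; auto; intros; lia.
  - destruct IHB as [[H1 H2]|[t [H1 [H2 [H3 H4]]]]].
    + rewrite H1. simpl. destruct (G B =? 0) eqn:E.
      * apply Nat.eqb_eq in E. left. split; auto. intros t Ht.
        destruct (Nat.eq_dec t B); subst; auto. apply H2; lia.
      * apply Nat.eqb_neq in E. right. exists B. repeat split; auto; intros; apply H2; lia.
    + right. exists t. rewrite H2. destruct (G t =? 0) eqn:E; [apply Nat.eqb_eq in E; congruence|].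
      repeat split; auto.
Qed.

Lemma first_nz_ext B G1 G2 : (forall t, t < B -> G1 t = G2 t) -> first_nz B G1 = first_nz B G2.
Proof.
  unfold first_nz. induction B; simpl; intros; auto.
  rewrite IHB by auto. rewrite H by lia. auto.
Qed.

Lemma first_nz_witness B G t : t < B -> G t <> 0 -> first_nz B G <> 0.
Proof.
  intros Ht HG. destruct (first_nz_spec B G) as [[_ H]|[t' [_ [H1 [H2 _]]]]];
    [exfalso; apply HG, H; auto|congruence].
Qed.

Lemma first_nz_stable B B' G : first_nz B G <> 0 -> first_nz B' G <> 0 -> first_nz B G = first_nz B' G.
Proof.
  intros H1 H2.
  destruct (first_nz_spec B G) as [[? _]|[t [_ [E1 [N1 P1]]]]]; [congruence|].
  destruct (first_nz_spec B' G) as [[? _]|[t' [_ [E2 [N2 P2]]]]]; [congruence|].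
  rewrite E1, E2. destruct (Nat.lt_trichotomy t t') as [?|[?|?]]; subst; auto.
  - exfalso; apply N1, P2; auto.
  - exfalso; apply N2, P1; auto.
Qed.

(** * A fuel-bounded interpreter for partial recursive functions *)

Section RecfInd.
Variable P : recf -> Prop.
Hypothesis HZ : P RZero.
Hypothesis HS : P RSucc.
Hypothesis HP : forall i, P (RProj i).
Hypothesis HC : forall f gs, P f -> Forall P gs -> P (RComp f gs).
Hypothesis HR : forall f g, P f -> P g -> P (RPrec f g).
Hypothesis HM : forall f, P f -> P (RMin f).
Fixpoint recf_ind2 (e : recf) : P e :=
  match e with
  | RZero => HZ | RSucc => HS | RProj i => HP i
  | RComp f gs => HC f gs (recf_ind2 f)
     ((fix go (l : list recf) : Forall P l :=
        match l with nil => Forall_nil _ | g :: l => Forall_cons _ (recf_ind2 g) (go l) end) gs)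
  | RPrec f g => HR f g (recf_ind2 f) (recf_ind2 g)
  | RMin f => HM f (recf_ind2 f)
  end.
End RecfInd.

Definition allnz (l : list nat) : bool := forallb (fun v => negb (v =? 0)) l.

(** Encoding of one step of a minimisation: [1] (stop, undetermined) if the
    value is not yet known, [S (S t)] (stop, answer [t]) if it is [0], and
    [0] (continue) otherwise. *)
Definition min_step t v := if v =? 0 then 1 else if pred v =? 0 then S (S t) else 0.

(** [run e F xs] is [S y] if [e] returns [y] on [xs] within the search bound
    [F] for every minimisation, and [0] if that is not (yet) determined. *)
Fixpoint run (e : recf) (F : nat) (xs : list nat) : nat :=
  match e with
  | RZero => 1
  | RSucc => match xs with nil => 0 | x :: _ => S (S x) end
  | RProj i => S (nth i xs 0)
  | RComp f gs => if allnz (map (fun g => run g F xs) gs)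
                  then run f F (map (fun g => pred (run g F xs)) gs) else 0
  | RPrec f g => match xs with nil => 0 | n :: xs' =>
      loopf n (run f F xs') (fun t acc => if acc =? 0 then 0 else run g F (t :: pred acc :: xs')) end
  | RMin f => pred (first_nz F (fun t => min_step t (run f F (t :: xs))))
  end.

Lemma min_step_inv t v z : min_step t v = z ->
  (z = 0 /\ exists k, v = S (S k)) \/ (z = 1 /\ v = 0) \/ (z = S (S t) /\ v = 1).
Proof. unfold min_step. destruct v as [|[|k]]; simpl; intros <-; eauto. Qed.

Lemma run_sound e F xs y : run e F xs = S y -> eval e xs y.
Proof.
  revert F xs y. induction e using recf_ind2; intros F xs y Hy; simpl in Hy.
  - injection Hy as <-. constructor.
  - destruct xs; try discriminate. injection Hy as <-. constructor.
  - injection Hy as <-. constructor.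
  - destruct (allnz _) eqn:E; try discriminate.
    econstructor; [|eapply IHe; eauto].
    clear IHe Hy. induction H; simpl in *; [constructor|].
    destruct (run x F xs) eqn:Ex; simpl in E; try discriminate.
    constructor; eauto.
  - destruct xs as [|n xs']; try discriminate.
    revert y Hy. induction n; simpl; intros y Hy; [constructor; eauto|].
    destruct (loopf n _ _) eqn:El; simpl in Hy; try discriminate.
    econstructor; eauto.
  - destruct (first_nz_spec F (fun t => min_step t (run e F (t :: xs))))
      as [[H1 _]|[t [H1 [H2 [H3 H4]]]]]; [rewrite H1 in Hy; discriminate|].
    rewrite H2 in Hy.
    destruct (min_step_inv t (run e F (t :: xs)) _ eq_refl) as [[? _]|[[? _]|[E1 E2]]];
      try congruence; [rewrite H in Hy; discriminate|].
    rewrite E1 in Hy. injection Hy as <-.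
    constructor; [eapply IHe; eauto|].
    intros m Hm. specialize (H4 m Hm).
    destruct (min_step_inv m (run e F (m :: xs)) _ H4) as [[_ [k Hk]]|[[? _]|[? _]]];
      try discriminate.
    exists k. eapply IHe; eauto.
Qed.

Lemma eventually_all (n : nat) (P : nat -> nat -> Prop) :
  (forall m, m < n -> exists F0, forall F, F0 <= F -> P m F) ->
  exists F0, forall F, F0 <= F -> forall m, m < n -> P m F.
Proof.
  induction n; intros H; [exists 0; intros; lia|].
  destruct IHn as [F1 HF1]; [intros; apply H; lia|].
  destruct (H n) as [F2 HF2]; [lia|].
  exists (F1 + F2). intros F HF m Hm.
  destruct (Nat.eq_dec m n); [subst; apply HF2; lia|apply HF1; lia].
Qed.

Lemma allnz_map_S l : allnz (map S l) = true.
Proof. induction l; simpl; auto. Qed.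

Fixpoint run_complete (e : recf) (xs : list nat) (y : nat) (H : eval e xs y) {struct H} :
  exists F0, forall F, F0 <= F -> run e F xs = S y
with run_list_complete (gs : list recf) (xs ys : list nat) (H : eval_list gs xs ys) {struct H} :
  exists F0, forall F, F0 <= F -> map (fun g => run g F xs) gs = map S ys.
Proof.
  - destruct H as [xs|x xs|i xs|f gs xs ys y H H0|f g xs y H|f g n xs r y H H0|f xs n H e].
    + exists 0; reflexivity.
    + exists 0; reflexivity.
    + exists 0; reflexivity.
    + destruct (run_list_complete _ _ _ H) as [F1 H1].
      destruct (run_complete _ _ _ H0) as [F2 H2].
      exists (F1 + F2). intros F HF. simpl. rewrite H1, allnz_map_S by lia.
      replace (map (fun g => pred (run g F xs)) gs) with ys; [apply H2; lia|].
      rewrite <- (map_map (fun g => run g F xs) pred), H1, map_map by lia.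
      symmetry; apply map_id.
    + destruct (run_complete _ _ _ H) as [F1 H1]. exists F1. intros. simpl. auto.
    + destruct (run_complete _ _ _ H) as [F1 H1].
      destruct (run_complete _ _ _ H0) as [F2 H2].
      exists (F1 + F2). intros F HF. simpl. specialize (H1 F ltac:(lia)). simpl in H1.
      rewrite H1. simpl. apply H2; lia.
    + destruct (run_complete _ _ _ H) as [F1 H1].
      destruct (eventually_all n (fun m F => exists k, run f F (m :: xs) = S (S k))) as [F2 H2].
      { intros m Hm. destruct (e m Hm) as [k Hk].
        destruct (run_complete _ _ _ Hk) as [F3 H3]. exists F3. intros. exists k. auto. }
      exists (F1 + F2 + S n). intros F HF. simpl.
      destruct (first_nz_spec F (fun t => min_step t (run f F (t :: xs))))
        as [[H5 H6]|[t [H5 [H6 [H7 H8]]]]].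
      * exfalso. specialize (H6 n ltac:(lia)). simpl in H6. rewrite H1 in H6 by lia. discriminate.
      * rewrite H6. simpl in *.
        destruct (Nat.lt_trichotomy t n) as [Hlt|[Heq|Hgt]].
        -- exfalso. destruct (H2 F ltac:(lia) t Hlt) as [k Hk]. rewrite Hk in H7. auto.
        -- subst. rewrite H1 by lia. reflexivity.
        -- exfalso. specialize (H8 n Hgt). rewrite H1 in H8 by lia. discriminate.
  - destruct H.
    + exists 0; reflexivity.
    + destruct (run_complete _ _ _ H) as [F1 H1].
      destruct (run_list_complete _ _ _ H0) as [F2 H2].
      exists (F1 + F2). intros F HF. simpl. rewrite H1, H2 by lia. reflexivity.
Qed.

Fixpoint eval_det (e : recf) (xs : list nat) (y : nat) (H : eval e xs y) {struct H} :
  forall y', eval e xs y' -> y = y'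
with eval_list_det (gs : list recf) (xs ys : list nat) (H : eval_list gs xs ys) {struct H} :
  forall ys', eval_list gs xs ys' -> ys = ys'.
Proof.
  - destruct H as [xs|x xs|i xs|f gs xs ys y H H0|f g xs y H|f g n xs r y H H0|f xs n H e];
      intros y' H'; inversion H'; subst; auto.
    + assert (ys = ys0) by (eapply eval_list_det; eauto). subst. eapply eval_det; eauto.
    + eapply eval_det; eauto.
    + assert (r = r0) by (eapply eval_det; eauto). subst. eapply eval_det; eauto.
    + destruct (Nat.lt_trichotomy n y') as [Hl|[Heq|Hg]]; auto.
      * destruct (H2 n Hl) as [k Hk]. apply eval_det with (y' := S k) in H; [discriminate|exact Hk].
      * destruct (e y' Hg) as [k Hk]. apply eval_det with (y' := 0) in Hk; [discriminate|exact H1].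
  - destruct H as [xs|g gs xs y ys H H0]; intros ys' H'; inversion H'; subst; auto.
    f_equal; [eapply eval_det|eapply eval_list_det]; eauto.
Qed.

(** The interpreter [run] is itself expressible in the loop language:
    [Run e a] evaluates, in the environment [F :: xs] with [length xs = a],
    to [run e F xs].  Hence bounded simulation of a machine is computable. *)
Definition vars k n := el (map EV (seq k n)).
Fixpoint AllNZ (l : list expr) : expr :=
  match l with nil => Lit 1 | a :: l => If a (AllNZ l) EZ end.
Definition MinStep t v := If v (If (Pred v) EZ (ES (ES t))) (Lit 1).

Fixpoint Run (e : recf) (a : nat) : expr :=
  match e with
  | RZero => Lit 1
  | RSucc => match a with 0 => EZ | _ => ES (ES (EV 1)) end
  | RProj i => ES (EV (S i))
  | RComp f gs =>
      If (AllNZ (map (fun g => Run g a) gs))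
         (EApp (Run f (length gs)) (ECons (EV 0) (el (map (fun g => Pred (Run g a)) gs)))) EZ
  | RPrec f g => match a with 0 => EZ | S a' =>
      EApp (ELoop (EV 0) (EApp (Run f a') (ECons (EV 1) (vars 2 a')))
                  (If (EV 1) (EApp (Run g (S a))
                                   (ECons (EV 3) (ECons (EV 0) (ECons (Pred (EV 1)) (vars 4 a'))))) EZ))
           (ECons (EV 1) (ECons (EV 0) (vars 2 a')))
    end
  | RMin f => Pred (FirstNZ (EV 0)
                (MinStep (EV 0) (EApp (Run f (S a)) (ECons (EV 2) (ECons (EV 0) (vars 3 a))))))
  end.

Lemma seml_vars env k n : k + n <= length env -> seml env (vars k n) = firstn n (skipn k env).
Proof.
  unfold vars. rewrite seml_el, map_map. revert k. induction n; intros k Hk; simpl; auto.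
  destruct (skipn k env) eqn:E.
  - apply (f_equal (@length nat)) in E. rewrite length_skipn in E. simpl in E. lia.
  - f_equal.
    + rewrite <- (firstn_skipn k env) at 1. rewrite E, app_nth2; rewrite length_firstn; [|lia].
      replace (k - Nat.min k (length env)) with 0 by lia. reflexivity.
    + rewrite IHn by lia. f_equal. rewrite <- (skipn_skipn 1 k), E. reflexivity.
Qed.

Lemma sem_AllNZ env l : sem env (AllNZ l) = if allnz (map (sem env) l) then 1 else 0.
Proof.
  induction l; cbn [AllNZ map]; [apply sem_Lit|].
  rewrite sem_If, IHl. destruct (sem env a); reflexivity.
Qed.

Lemma sem_MinStep env t v : sem env (MinStep t v) = min_step (sem env t) (sem env v).
Proof.
  unfold MinStep, min_step. rewrite !sem_If, sem_Pred, sem_Lit.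
  destruct (sem env v); simpl; auto.
Qed.

Ltac run_simpl := cbn -[Pred Add Sub Mul IsZero If Le FirstNZ] in *.

Lemma sem_Run e a F xs : length xs = a -> sem (F :: xs) (Run e a) = run e F xs.
Proof.
  revert a F xs. induction e using recf_ind2; intros a F xs Hl; run_simpl.
  - reflexivity.
  - destruct a, xs; simpl in *; try lia; auto.
  - reflexivity.
  - rewrite sem_If, sem_AllNZ, map_map.
    rewrite Forall_forall in H.
    rewrite (map_ext_in _ (fun g => run g F xs)) by (intros g Hg; apply H; auto).
    destruct (allnz _); run_simpl; [|reflexivity].
    rewrite seml_el, map_map.
    rewrite (map_ext_in _ (fun g => pred (run g F xs)))
      by (intros g Hg; rewrite sem_Pred, H; auto).
    apply IHe. rewrite length_map. reflexivity.
  - destruct a, xs as [|n xs']; run_simpl; try lia; auto.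
    injection Hl as Hl. subst a.
    rewrite (seml_vars (F :: n :: xs')) by (run_simpl; lia). run_simpl. rewrite firstn_all.
    rewrite seml_vars by (run_simpl; lia). run_simpl. rewrite firstn_all, IHe1 by auto.
    apply loopf_ext. intros t acc. rewrite sem_If. run_simpl.
    destruct acc; run_simpl; auto.
    rewrite sem_Pred, seml_vars by (run_simpl; lia). run_simpl. rewrite firstn_all.
    apply IHe2. run_simpl. lia.
  - rewrite sem_Pred, sem_FirstNZ. f_equal. apply first_nz_ext. intros t _.
    rewrite sem_MinStep. run_simpl. rewrite seml_vars by (run_simpl; lia). run_simpl.
    subst a; rewrite firstn_all, IHe by (run_simpl; lia). reflexivity.
Qed.

Lemma wf_vars k n : wfl (vars k n).
Proof.
  unfold vars. apply wfl_el, Forall_forall. intros x Hx.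
  apply in_map_iff in Hx. destruct Hx as [? [<- _]]. exact I.
Qed.

Lemma wf_AllNZ l : Forall wf l -> wf (AllNZ l).
Proof.
  induction 1; cbn [AllNZ]; [apply wf_Lit|].
  unfold If, Add, Mul, Sub, IsZero, Pred. simpl. repeat split; auto using wf_Lit.
Qed.

Lemma wf_Run e a : wf (Run e a).
Proof.
  revert a. induction e using recf_ind2; intros a; cbn [Run].
  - apply wf_Lit.
  - destruct a; exact I.
  - exact I.
  - rewrite Forall_forall in H.
    assert (Hargs : Forall wf (map (fun g => Run g a) gs)).
    { apply Forall_forall. intros x Hx. apply in_map_iff in Hx. destruct Hx as [g [<- Hg]]. auto. }
    assert (Hpreds : wfl (el (map (fun g => Pred (Run g a)) gs))).
    { apply wfl_el, Forall_forall. intros x Hx. apply in_map_iff in Hx.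
      destruct Hx as [g [<- Hg]]. unfold Pred. simpl. auto. }
    unfold If, Add, Mul, Sub, IsZero, Pred. simpl.
    repeat split; auto using wf_Lit, wf_AllNZ.
  - destruct a; [exact I|].
    unfold If, Add, Mul, Sub, IsZero, Pred. simpl. repeat split; auto using wf_Lit, wf_vars.
  - unfold If, Add, Mul, Sub, IsZero, Pred, FirstNZ, MinStep. simpl.
    repeat split; auto using wf_Lit, wf_vars.
Qed.

Definition sum_below (B : nat) (f : nat -> nat) : nat := loopf B 0 (fun t acc => acc + f t).

Lemma sum_below_S B f : sum_below (S B) f = sum_below B f + f B.
Proof. reflexivity. Qed.

Lemma sum_below_ext B f g : (forall t, t < B -> f t = g t) -> sum_below B f = sum_below B g.
Proof. induction B; intros H; [reflexivity|]. rewrite !sum_below_S, IHB, H by auto. reflexivity. Qed.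

Lemma sum_below_lt B s : sum_below B (fun u => if u <? s then 1 else 0) = Nat.min B s.
Proof. induction B; [reflexivity|]. rewrite sum_below_S, IHB. destruct (Nat.ltb_spec B s); lia. Qed.

Definition tri n := loopf n 0 (fun t acc => S (acc + t)).

Lemma tri_S n : tri (S n) = tri n + n + 1.
Proof. unfold tri. simpl. lia. Qed.

Lemma tri_mono a b : a <= b -> tri a <= tri b.
Proof. induction 1; auto. rewrite tri_S. lia. Qed.

Lemma tri_ge n : n <= tri n.
Proof. induction n; [unfold tri; simpl; lia|]. rewrite tri_S. lia. Qed.

Lemma npair_tri a b : npair a b = tri (a + b) + b.
Proof.
  assert (H : 2 * tri (a + b) = (a + b) * (a + b + 1)).
  { unfold tri. induction (a + b); simpl in *; lia. }
  unfold npair. rewrite <- H, Nat.mul_comm, Nat.div_mul; lia.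
Qed.

Definition diag z := sum_below z (fun u => if tri (S u) <=? z then 1 else 0).
Definition sndp z := z - tri (diag z).
Definition fstp z := diag z - sndp z.

Lemma diag_npair a b : diag (npair a b) = a + b.
Proof.
  unfold diag. rewrite npair_tri.
  rewrite (sum_below_ext _ _ (fun u => if u <? a + b then 1 else 0)).
  - rewrite sum_below_lt. pose proof (tri_ge (a + b)). lia.
  - intros u _. destruct (Nat.ltb_spec u (a + b)) as [Hu|Hu].
    + pose proof (tri_mono (S u) (a + b) Hu).
      replace (tri (S u) <=? tri (a + b) + b) with true by (symmetry; apply Nat.leb_le; lia).
      reflexivity.
    + pose proof (tri_mono (S (a + b)) (S u) ltac:(lia)). rewrite tri_S in H.
      replace (tri (S u) <=? tri (a + b) + b) with false by (symmetry; apply Nat.leb_gt; lia).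
      reflexivity.
Qed.

Lemma sndp_npair a b : sndp (npair a b) = b.
Proof. unfold sndp. rewrite diag_npair, npair_tri. lia. Qed.

Lemma fstp_npair a b : fstp (npair a b) = a.
Proof. unfold fstp. rewrite diag_npair, sndp_npair. lia. Qed.

Definition hdc c := fstp (pred c).
Definition tlc c := sndp (pred c).
Definition nthc c i := hdc (Nat.iter i tlc c).
Definition lenc c := sum_below c (fun t => if Nat.iter t tlc c =? 0 then 0 else 1).

Lemma iter_tlc_code l i : Nat.iter i tlc (code l) = code (skipn i l).
Proof.
  revert l. induction i; intros l; [reflexivity|]. rewrite Nat.iter_succ, IHi.
  destruct (le_lt_dec (length l) i).
  - rewrite !skipn_all2 by lia. reflexivity.
  - replace (skipn (S i) l) with (skipn 1 (skipn i l)) by (rewrite skipn_skipn; f_equal; lia).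
    destruct (skipn i l) eqn:E.
    + apply (f_equal (@length nat)) in E. rewrite length_skipn in E. simpl in E. lia.
    + unfold tlc. simpl. apply sndp_npair.
Qed.

Lemma nthc_code l i : nthc (code l) i = nth i l 0.
Proof.
  unfold nthc. rewrite iter_tlc_code.
  rewrite <- (firstn_skipn i l) at 2. destruct (le_lt_dec (length l) i).
  - rewrite skipn_all2, app_nil_r, nth_overflow by (rewrite ?length_firstn; lia). reflexivity.
  - destruct (skipn i l) eqn:E.
    + apply (f_equal (@length nat)) in E. rewrite length_skipn in E. simpl in E. lia.
    + rewrite app_nth2, length_firstn by (rewrite length_firstn; lia).
      replace (i - Nat.min i (length l)) with 0 by lia. unfold hdc. simpl. apply fstp_npair.
Qed.

Lemma code_ge l : length l <= code l.
Proof. induction l; simpl; [lia|]. rewrite npair_tri. lia. Qed.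

Lemma lenc_code l : lenc (code l) = length l.
Proof.
  unfold lenc. rewrite (sum_below_ext _ _ (fun u => if u <? length l then 1 else 0)).
  - rewrite sum_below_lt. pose proof (code_ge l). lia.
  - intros t _. rewrite iter_tlc_code. destruct (Nat.ltb_spec t (length l)).
    + destruct (skipn t l) eqn:E; [|reflexivity].
      apply (f_equal (@length nat)) in E. rewrite length_skipn in E. simpl in E. lia.
    + rewrite skipn_all2 by lia. reflexivity.
Qed.

Definition par x := x - (Nat.div2 x + Nat.div2 x).
Definition digit i j := par (Nat.iter i Nat.div2 j).

Lemma par_spec x : par x = if Nat.odd x then 1 else 0.
Proof. unfold par. pose proof (Nat.div2_odd x). destruct (Nat.odd x); simpl in H; lia. Qed.

(** The [t]-th entry of [<p, w>] where [c] codes a prefix of [p] and [w] is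
    the digit sequence of [j], and the code of its first [k] entries. *)
Definition pair_entry c j t := if par t =? 0 then nthc c (Nat.div2 t) else digit (Nat.div2 t) j.
Definition pair_prefix c j k :=
  loopf k 0 (fun t acc => S (npair (pair_entry c j (k - t - 1)) acc)).

Lemma pair_prefix_code c j k : pair_prefix c j k = code (map (pair_entry c j) (seq 0 k)).
Proof.
  unfold pair_prefix.
  assert (H : forall t, t <= k ->
            loopf t 0 (fun t acc => S (npair (pair_entry c j (k - t - 1)) acc))
            = code (map (pair_entry c j) (seq (k - t) t))).
  { induction t; intros Ht; [reflexivity|]. simpl. rewrite IHt by lia.
    replace (k - S t) with (k - t - 1) by lia.
    replace (k - t) with (S (k - t - 1)) at 2 by lia. reflexivity. }
  rewrite H by lia. replace (k - k) with 0 by lia. reflexivity.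
Qed.

Definition Tri x := EApp (ELoop (EV 0) EZ (ES (Add (EV 1) (EV 0)))) (el [x]).
Definition Npair a b := EApp (Add (Tri (Add (EV 0) (EV 1))) (EV 1)) (el [a; b]).
Definition Diag z := EApp (ELoop (EV 0) EZ (Add (EV 1) (Le (Tri (ES (EV 0))) (EV 2)))) (el [z]).
Definition Sndp z := EApp (Sub (EV 0) (Tri (Diag (EV 0)))) (el [z]).
Definition Fstp z := EApp (Sub (Diag (EV 0)) (Sndp (EV 0))) (el [z]).
Definition Hdc c := Fstp (Pred c).
Definition Tlc c := Sndp (Pred c).
Definition IterTlc c i := EApp (ELoop (EV 1) (EV 0) (Tlc (EV 1))) (el [c; i]).
Definition Nthc c i := Hdc (IterTlc c i).
Definition Lenc c :=
  EApp (ELoop (EV 0) EZ (Add (EV 1) (If (IterTlc (EV 2) (EV 0)) (Lit 1) EZ))) (el [c]).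
Definition Half x := EApp (ELoop (EV 0) EZ (Sub (EV 0) (EV 1))) (el [x]).
Definition Par x := EApp (Sub (EV 0) (Add (Half (EV 0)) (Half (EV 0)))) (el [x]).
Definition Digit i j := Par (EApp (ELoop (EV 0) (EV 1) (Half (EV 1))) (el [i; j])).
Definition Pow2 L := EApp (ELoop (EV 0) (Lit 1) (Add (EV 1) (EV 1))) (el [L]).
Definition PairEntry c j t :=
  EApp (If (Par (EV 2)) (Digit (Half (EV 2)) (EV 1)) (Nthc (EV 0) (Half (EV 2)))) (el [c; j; t]).
Definition PairPrefix c j k :=
  EApp (ELoop (EV 2) EZ (ES (Npair (PairEntry (EV 2) (EV 3) (Sub (Sub (EV 4) (EV 0)) (Lit 1))) (EV 1))))
       (el [c; j; k]).

Arguments Tri : simpl never. Arguments Npair : simpl never. Arguments Diag : simpl never.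
Arguments Sndp : simpl never. Arguments Fstp : simpl never. Arguments Hdc : simpl never.
Arguments Tlc : simpl never. Arguments IterTlc : simpl never. Arguments Nthc : simpl never.
Arguments Lenc : simpl never. Arguments Half : simpl never. Arguments Par : simpl never.
Arguments Digit : simpl never. Arguments Pow2 : simpl never.
Arguments PairEntry : simpl never. Arguments PairPrefix : simpl never.

Lemma sem_Tri env x : sem env (Tri x) = tri (sem env x).
Proof. unfold Tri. sem_simpl. apply loopf_ext. intros. rewrite sem_Add. reflexivity. Qed.

Lemma sem_Npair env a b : sem env (Npair a b) = npair (sem env a) (sem env b).
Proof. unfold Npair. sem_simpl. rewrite sem_Add, sem_Tri, sem_Add, npair_tri. reflexivity. Qed.

Lemma sem_Diag env z : sem env (Diag z) = diag (sem env z).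
Proof.
  unfold Diag. sem_simpl. apply loopf_ext. intros.
  rewrite sem_Add, sem_Le, sem_Tri. reflexivity.
Qed.

Lemma sem_Sndp env z : sem env (Sndp z) = sndp (sem env z).
Proof. unfold Sndp. sem_simpl. rewrite sem_Sub, sem_Tri, sem_Diag. reflexivity. Qed.

Lemma sem_Fstp env z : sem env (Fstp z) = fstp (sem env z).
Proof. unfold Fstp. sem_simpl. rewrite sem_Sub, sem_Sndp, sem_Diag. reflexivity. Qed.

Lemma sem_Tlc env c : sem env (Tlc c) = tlc (sem env c).
Proof. unfold Tlc. rewrite sem_Sndp, sem_Pred. reflexivity. Qed.

Lemma sem_IterTlc env c i : sem env (IterTlc c i) = Nat.iter (sem env i) tlc (sem env c).
Proof.
  unfold IterTlc. sem_simpl. rewrite <- loopf_iter. apply loopf_ext. intros.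
  rewrite sem_Tlc. reflexivity.
Qed.

Lemma sem_Nthc env c i : sem env (Nthc c i) = nthc (sem env c) (sem env i).
Proof. unfold Nthc, Hdc. rewrite sem_Fstp, sem_Pred, sem_IterTlc. reflexivity. Qed.

Lemma sem_Lenc env c : sem env (Lenc c) = lenc (sem env c).
Proof.
  unfold Lenc. sem_simpl. apply loopf_ext. intros.
  rewrite sem_Add, sem_If, sem_IterTlc, sem_Lit. reflexivity.
Qed.

Lemma sem_Half env x : sem env (Half x) = Nat.div2 (sem env x).
Proof.
  unfold Half. sem_simpl.
  rewrite (loopf_ext _ _ _ (fun t acc => t - acc)) by (intros; rewrite sem_Sub; reflexivity).
  induction (sem env x) as [|n IH]; [reflexivity|]. simpl. rewrite IH.
  pose proof (Nat.div2_odd n). pose proof (Nat.div2_odd (S n)).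
  rewrite Nat.odd_succ, <- Nat.negb_odd in H0. destruct (Nat.odd n); simpl in *; lia.
Qed.

Lemma sem_Par env x : sem env (Par x) = par (sem env x).
Proof. unfold Par. sem_simpl. rewrite sem_Sub, sem_Add, !sem_Half. reflexivity. Qed.

Lemma sem_Digit env i j : sem env (Digit i j) = digit (sem env i) (sem env j).
Proof.
  unfold Digit. rewrite sem_Par. sem_simpl. unfold digit. f_equal.
  rewrite <- loopf_iter. apply loopf_ext. intros. rewrite sem_Half. reflexivity.
Qed.

Lemma sem_Pow2 env L : sem env (Pow2 L) = 2 ^ (sem env L).
Proof.
  unfold Pow2. sem_simpl.
  rewrite (loopf_ext _ _ _ (fun _ acc => acc + acc)) by (intros; rewrite sem_Add; reflexivity).
  rewrite sem_Lit. induction (sem env L); simpl; [reflexivity|]. rewrite IHn. lia.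
Qed.

Lemma sem_PairEntry env c j t :
  sem env (PairEntry c j t) = pair_entry (sem env c) (sem env j) (sem env t).
Proof.
  unfold PairEntry. sem_simpl. rewrite sem_If, sem_Par, sem_Digit, sem_Nthc, !sem_Half. reflexivity.
Qed.

Lemma sem_PairPrefix env c j k :
  sem env (PairPrefix c j k) = pair_prefix (sem env c) (sem env j) (sem env k).
Proof.
  unfold PairPrefix. sem_simpl. apply loopf_ext. intros.
  rewrite sem_Npair, sem_PairEntry, !sem_Sub, sem_Lit. reflexivity.
Qed.

(** Parameters: a machine [eH] (computing the outer reduction [H]), total
    [recf]s [e1], [e2] with graphs [U1], [U2] giving rational approximations
    [U1 / (U2 + 1)] of the distances between dense points.  The program reads
    [npair n c] with [c] the code of a prefix of a name [p]. *)
Section SearchProgram.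
Variables (eH e1 e2 : recf) (U1 U2 : list nat -> nat).

(** The answer ([S a]) of [eH] at index [n + 5] on [<p, w_j>], where [w_j] is
    the length-[L] word of digits of [j], found with bound [s] and reading at
    most [2L] input entries; [0] if none is found. *)
Definition answer c n s L j :=
  first_nz (S (L + L)) (fun k => run eH s [npair (n + 5) (pair_prefix c j k)] - 1).
Definition close a b k := if U1 [a; b; k] * 2 ^ k <=? 3 * S (U2 [a; b; k]) then 1 else 0.
Definition support c n s L j := sum_below (2 ^ L) (fun i =>
  if answer c n s L i =? 0 then 0
  else close (pred (answer c n s L i)) (pred (answer c n s L j)) (n + 4)).
Definition accept c n s L j :=
  if answer c n s L j =? 0 then 0
  else if S (2 ^ L) <=? support c n s L j + support c n s L j then answer c n s L j else 0.
Definition stage c n s := first_nz (S s) (fun L => first_nz (2 ^ L) (fun j => accept c n s L j)).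
Definition search z := first_nz (lenc (sndp z)) (fun s => stage (sndp z) (fstp z) s).

Definition Answer c n s L j :=
  EApp (FirstNZ (ES (Add (EV 3) (EV 3)))
    (Sub (EApp (Run eH 1) (el [EV 4; Npair (Add (EV 3) (Lit 5)) (PairPrefix (EV 2) (EV 6) (EV 0))]))
         (Lit 1)))
  (el [c; n; s; L; j]).
Definition Close a b k :=
  EApp (Le (Mul (EExt e1 U1 (el [EV 0; EV 1; EV 2])) (Pow2 (EV 2)))
           (Mul (Lit 3) (ES (EExt e2 U2 (el [EV 0; EV 1; EV 2])))))
  (el [a; b; k]).
Definition Support c n s L j :=
  EApp (ELoop (Pow2 (EV 3)) EZ (Add (EV 1)
    (If (Answer (EV 2) (EV 3) (EV 4) (EV 5) (EV 0))
        (Close (Pred (Answer (EV 2) (EV 3) (EV 4) (EV 5) (EV 0)))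
               (Pred (Answer (EV 2) (EV 3) (EV 4) (EV 5) (EV 6))) (Add (EV 3) (Lit 4)))
        EZ)))
  (el [c; n; s; L; j]).
Definition Accept c n s L j :=
  EApp (If (Answer (EV 0) (EV 1) (EV 2) (EV 3) (EV 4))
    (If (Le (ES (Pow2 (EV 3)))
            (Add (Support (EV 0) (EV 1) (EV 2) (EV 3) (EV 4))
                 (Support (EV 0) (EV 1) (EV 2) (EV 3) (EV 4))))
        (Answer (EV 0) (EV 1) (EV 2) (EV 3) (EV 4)) EZ) EZ)
  (el [c; n; s; L; j]).
Definition Stage c n s :=
  EApp (FirstNZ (ES (EV 2)) (FirstNZ (Pow2 (EV 0)) (Accept (EV 4) (EV 5) (EV 6) (EV 2) (EV 0))))
  (el [c; n; s]).
Definition Search :=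
  EApp (FirstNZ (Lenc (EV 0)) (Stage (EV 2) (EV 3) (EV 0))) (el [Sndp (EV 0); Fstp (EV 0)]).

Arguments Answer : simpl never. Arguments Close : simpl never. Arguments Support : simpl never.
Arguments Accept : simpl never. Arguments Stage : simpl never.

Lemma sem_Answer env c n s L j :
  sem env (Answer c n s L j) = answer (sem env c) (sem env n) (sem env s) (sem env L) (sem env j).
Proof.
  unfold Answer. sem_simpl. rewrite sem_FirstNZ. sem_simpl. rewrite sem_Add. sem_simpl.
  apply first_nz_ext. intros k _. rewrite sem_Sub, sem_Lit. sem_simpl.
  rewrite sem_Run by reflexivity. sem_simpl.
  rewrite sem_Npair, sem_Add, sem_Lit, sem_PairPrefix. reflexivity.
Qed.

Lemma sem_Close env a b k : sem env (Close a b k) = close (sem env a) (sem env b) (sem env k).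
Proof. unfold Close. sem_simpl. rewrite sem_Le, !sem_Mul, sem_Pow2, sem_Lit. reflexivity. Qed.

Lemma sem_Support env c n s L j :
  sem env (Support c n s L j) = support (sem env c) (sem env n) (sem env s) (sem env L) (sem env j).
Proof.
  unfold Support. sem_simpl. rewrite sem_Pow2. apply loopf_ext. intros t acc.
  rewrite sem_Add, sem_If. sem_simpl. rewrite sem_Close, !sem_Pred, !sem_Answer, sem_Add, sem_Lit.
  reflexivity.
Qed.

Lemma sem_Accept env c n s L j :
  sem env (Accept c n s L j) = accept (sem env c) (sem env n) (sem env s) (sem env L) (sem env j).
Proof.
  unfold Accept. sem_simpl. rewrite !sem_If, sem_Le, sem_Add, !sem_Support, !sem_Answer. sem_simpl.
  rewrite sem_Pow2. unfold accept. destruct (answer _ _ _ _ _ =? 0); [reflexivity|].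
  destruct (S _ <=? _); reflexivity.
Qed.

Lemma sem_Stage env c n s : sem env (Stage c n s) = stage (sem env c) (sem env n) (sem env s).
Proof.
  unfold Stage. sem_simpl. rewrite sem_FirstNZ. apply first_nz_ext. intros L _.
  rewrite sem_FirstNZ, sem_Pow2. apply first_nz_ext. intros j _. rewrite sem_Accept. reflexivity.
Qed.

Lemma sem_Search z : sem [z] Search = search z.
Proof.
  unfold Search. sem_simpl. rewrite sem_FirstNZ, sem_Lenc, sem_Sndp, sem_Fstp.
  apply first_nz_ext. intros s _. rewrite sem_Stage. reflexivity.
Qed.

Hypothesis HU1 : forall l, length l = 3 -> eval e1 l (U1 l).
Hypothesis HU2 : forall l, length l = 3 -> eval e2 l (U2 l).

Lemma search_eval z : eval (comp 1 Search) [z] (search z).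
Proof.
  rewrite <- sem_Search. apply comp_correct; [reflexivity|].
  unfold Search, Stage, Accept, Support, Close, Answer, FirstNZ, Lenc, Sndp, Fstp, Diag, Tri, Le,
    IsZero, Sub, Add, Mul, Pred, If, Pow2, IterTlc, Tlc, Npair, PairPrefix, PairEntry, Par, Half,
    Digit, Nthc, Hdc.
  simpl. repeat split; auto using wf_Run, wf_Lit.
Qed.
End SearchProgram.

Definition word_of (j L : nat) : list bool := map (fun i => digit i j =? 1) (seq 0 L).

Lemma digit_01 i j : digit i j = 0 \/ digit i j = 1.
Proof. unfold digit. rewrite par_spec. destruct (Nat.odd _); auto. Qed.

Lemma nth_map_seq {A} (f : nat -> A) i L d : i < L -> nth i (map f (seq 0 L)) d = f i.
Proof.
  intros H. rewrite nth_indep with (d' := f 0) by (rewrite length_map, length_seq; lia).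
  rewrite map_nth, seq_nth by lia. reflexivity.
Qed.

Lemma digit_word_of i j L : i < L -> digit i j = bit (nth i (word_of j L) false).
Proof.
  intros H. unfold word_of. rewrite nth_map_seq by lia.
  destruct (digit_01 i j) as [E|E]; rewrite E; reflexivity.
Qed.

Lemma word_of_length j L : length (word_of j L) = L.
Proof. unfold word_of. rewrite length_map, length_seq. reflexivity. Qed.

Lemma word_of_surj (w : list bool) : exists j, j < 2 ^ length w /\ word_of j (length w) = w.
Proof.
  induction w as [|b w IH]; [exists 0; split; simpl; auto|].
  destruct IH as [j' [Hj Hw]]. exists (bit b + 2 * j'). split; [destruct b; simpl in *; lia|].
  unfold word_of. cbn [length seq map]. rewrite <- seq_shift. f_equal.
  - unfold digit. cbn [Nat.iter nat_rect]. rewrite par_spec, Nat.odd_add_mul_2.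
    destruct b; reflexivity.
  - rewrite map_map. transitivity (word_of j' (length w)); [|exact Hw].
    unfold word_of. apply map_ext. intros i. unfold digit.
    rewrite Nat.iter_succ_r. destruct b; simpl bit.
    + rewrite Nat.add_1_l, Nat.div2_succ_double. reflexivity.
    + rewrite Nat.add_0_l, Nat.div2_double. reflexivity.
Qed.

Lemma prefix_length {A} (q : nat -> A) n : length (prefix q n) = n.
Proof. unfold prefix. rewrite length_map, length_seq. reflexivity. Qed.

Lemma prefix_nth {A} (q : nat -> A) n i d : i < n -> nth i (prefix q n) d = q i.
Proof. intros. unfold prefix. apply nth_map_seq. auto. Qed.

Lemma prefix_S {A} (q : nat -> A) n : prefix q (S n) = prefix q n ++ [q n].
Proof. unfold prefix. rewrite seq_S, map_app. reflexivity. Qed.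

Lemma prefix_ext {A} (q q' : nat -> A) n : (forall i, i < n -> q i = q' i) -> prefix q n = prefix q' n.
Proof. intros. unfold prefix. apply map_ext_in. intros. apply in_seq in H0. apply H. lia. Qed.

Lemma prefix_agree {A} (q q' : nat -> A) n (d : A) :
  prefix q n = prefix q' n -> forall i, i < n -> q i = q' i.
Proof. intros. rewrite <- (prefix_nth q n i d), <- (prefix_nth q' n i d) by auto. congruence. Qed.

Lemma list_eq_nth {A} (l1 l2 : list A) d : length l1 = length l2 ->
  (forall i, i < length l1 -> nth i l1 d = nth i l2 d) -> l1 = l2.
Proof.
  revert l2. induction l1; destruct l2; simpl; intros; try discriminate; auto.
  f_equal; [apply (H0 0); lia|]. apply IHl1; [lia|]. intros. apply (H0 (S i)). lia.
Qed.

Definition ind (b : bool) := if b then 1 else 0.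

Lemma sum_below_add B f g : sum_below B (fun i => f i + g i) = sum_below B f + sum_below B g.
Proof. induction B; [reflexivity|]. rewrite !sum_below_S, IHB. lia. Qed.

Lemma sum_below_le B f g : (forall i, i < B -> f i <= g i) -> sum_below B f <= sum_below B g.
Proof.
  induction B; intros H; [reflexivity|]. rewrite !sum_below_S.
  pose proof (H B ltac:(lia)). assert (sum_below B f <= sum_below B g) by auto. lia.
Qed.

Lemma sum_below_pos B f : 0 < sum_below B f -> exists i, i < B /\ f i <> 0.
Proof.
  induction B; intros H; [unfold sum_below in H; simpl in H; lia|].
  rewrite sum_below_S in H. destruct (f B) eqn:E.
  - destruct IHB as [i [? ?]]; [lia|]. exists i; split; auto.
  - exists B; split; lia.
Qed.

Lemma sum_below_mono B B' f : B <= B' -> sum_below B f <= sum_below B' f.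
Proof. induction 1; [lia|]. rewrite sum_below_S. lia. Qed.

Lemma count_complement B L :
  sum_below (2 ^ L) (fun j => ind (B j)) + sum_below (2 ^ L) (fun j => ind (negb (B j))) = 2 ^ L.
Proof.
  rewrite <- sum_below_add. generalize (2 ^ L). induction n; [reflexivity|].
  rewrite sum_below_S, IHn. destruct (B n); simpl; lia.
Qed.

(** * The measure estimate: majorities of words meet the tree *)

Open Scope R_scope.

Lemma half_pow_pos k : 0 < (/2) ^ k.
Proof. apply pow_lt. lra. Qed.

Lemma half_pow_inv k : (/2) ^ k * INR (2 ^ k) = 1.
Proof.
  rewrite pow_INR, <- Rpow_mult_distr. replace (/2 * INR 2) with 1 by (simpl; lra). apply pow1.
Qed.

Open Scope nat_scope.

Section Measure.
Variables (T : tree) (r : R).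
Hypothesis Hr : (/ 2 < r)%R.
Hypothesis Hm : measure_ge (paths T) r.

Definition word_cover (B : nat -> bool) L (i : nat) : option (list bool) :=
  if andb (i <? 2 ^ L) (B i) then Some (word_of i L) else None.

Lemma word_cover_weight B L N :
  cover_weight (word_cover B L) N
  = (INR (sum_below (Nat.min (S N) (2 ^ L)) (fun j => ind (B j))) * (/2) ^ L)%R.
Proof.
  unfold cover_weight, word_cover. pose proof (Nat.pow_nonzero 2 L).
  induction N; simpl sum_f_R0.
  - replace (Nat.min 1 (2 ^ L)) with 1 by lia.
    replace (0 <? 2 ^ L) with true by (symmetry; apply Nat.ltb_lt; lia).
    unfold sum_below, ind. simpl. destruct (B 0); simpl; rewrite ?word_of_length; lra.
  - rewrite IHN. destruct (S N <? 2 ^ L) eqn:E; simpl andb.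
    + apply Nat.ltb_lt in E. replace (Nat.min (S (S N)) (2 ^ L)) with (S (S N)) by lia.
      replace (Nat.min (S N) (2 ^ L)) with (S N) by lia.
      rewrite (sum_below_S (S N)), plus_INR.
      destruct (B (S N)); cbn [ind INR andb]; rewrite ?word_of_length; lra.
    + apply Nat.ltb_ge in E. replace (Nat.min (S (S N)) (2 ^ L)) with (Nat.min (S N) (2 ^ L)) by lia.
      lra.
Qed.

Lemma covering_words_majority (B : nat -> bool) L :
  (forall q, paths T q -> exists j, j < 2 ^ L /\ B j = true /\ prefix q L = word_of j L) ->
  2 ^ L < 2 * sum_below (2 ^ L) (fun j => ind (B j)).
Proof.
  intros Hc.
  assert (Hcov : cyl_covers (word_cover B L) (paths T)).
  { intros q Hq. destruct (Hc q Hq) as [j [Hj [HB Hp]]]. exists j, (word_of j L). split.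
    - unfold word_cover. apply Nat.ltb_lt in Hj. rewrite Hj, HB. reflexivity.
    - rewrite word_of_length. exact Hp. }
  destruct (Hm _ Hcov (/2)%R Hr) as [N HN]. rewrite word_cover_weight in HN.
  assert (Hle := sum_below_mono (Nat.min (S N) (2 ^ L)) (2 ^ L) (fun j => ind (B j)) ltac:(lia)).
  apply le_INR in Hle.
  pose proof (half_pow_pos L). pose proof (half_pow_inv L).
  apply INR_lt. rewrite mult_INR. simpl (INR 2).
  apply Rmult_lt_reg_l with ((/2) ^ L)%R; [assumption|]. nra.
Qed.

Lemma majority_meets_paths (B : nat -> bool) L :
  2 ^ L < 2 * sum_below (2 ^ L) (fun j => ind (B j)) ->
  exists j q, j < 2 ^ L /\ B j = true /\ paths T q /\ prefix q L = word_of j L.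
Proof.
  intros Hlt. apply NNPP. intros Hn.
  assert (Hc := covering_words_majority (fun j => negb (B j)) L).
  pose proof (count_complement B L).
  enough (2 ^ L < 2 * sum_below (2 ^ L) (fun j => ind (negb (B j)))) by lia.
  apply Hc. intros q Hq.
  destruct (word_of_surj (prefix q L)) as [j [Hj Hw]]. rewrite prefix_length in Hj, Hw.
  exists j. repeat split; auto.
  destruct (B j) eqn:E; auto. exfalso. apply Hn. exists j, q. auto.
Qed.
Definition meets_tree (j L : nat) : bool :=
  if excluded_middle_informative (exists q, paths T q /\ prefix q L = word_of j L) then true else false.

Lemma meets_tree_spec j L : meets_tree j L = true -> exists q, paths T q /\ prefix q L = word_of j L.
Proof. unfold meets_tree. destruct (excluded_middle_informative _); [auto|discriminate]. Qed.

Lemma meets_tree_majority L : 2 ^ L < 2 * sum_below (2 ^ L) (fun j => ind (meets_tree j L)).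
Proof.
  apply covering_words_majority. intros q Hq.
  destruct (word_of_surj (prefix q L)) as [j [Hj Hw]]. rewrite prefix_length in Hj, Hw.
  exists j. repeat split; auto. unfold meets_tree.
  destruct (excluded_middle_informative _) as [_|Hn]; [reflexivity|].
  exfalso. apply Hn. exists q. auto.
Qed.
End Measure.

(** * Koenig's lemma: a uniform bound over the paths of a tree *)

Section Koenig.
Variable T : tree.
Variable good : (nat -> bool) -> nat -> Prop.
Hypothesis good_mono : forall q L L', good q L -> L <= L' -> good q L'.
Hypothesis good_local : forall q q' L, (forall i, i < L -> q i = q' i) -> good q L -> good q' L.
Hypothesis good_paths : forall q, paths T q -> exists L, good q L.

Definition Bad (w : list bool) :=
  forall L, exists q, paths T q /\ prefix q (length w) = w /\ ~ good q L.

Lemma bad_step w : Bad w -> Bad (w ++ [true]) \/ Bad (w ++ [false]).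
Proof.
  intros Hb. apply NNPP. intros Hn. apply not_or_and in Hn. destruct Hn as [H1 H0].
  apply not_all_ex_not in H1 as [L1 H1]. apply not_all_ex_not in H0 as [L0 H0].
  destruct (Hb (L0 + L1)) as [q [Hq [Hp Hng]]]. apply Hng.
  assert (Hpre : forall b, q (length w) = b -> prefix q (length (w ++ [b])) = w ++ [b]).
  { intros b Eb. rewrite length_app, Nat.add_1_r, prefix_S, Hp, Eb. reflexivity. }
  destruct (q (length w)) eqn:E.
  - apply good_mono with L1; [|lia]. apply NNPP. intros Hg. apply H1. exists q. auto.
  - apply good_mono with L0; [|lia]. apply NNPP. intros Hg. apply H0. exists q. auto.
Qed.

Lemma bad_branch : Bad [] -> exists q, paths T q /\ forall n, Bad (prefix q n).
Proof.
  intros Hb0.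
  set (step := fun w => if excluded_middle_informative (Bad (w ++ [true]))
                        then w ++ [true] else w ++ [false]).
  set (wd := fix wd n := match n with 0 => [] | S n => step (wd n) end).
  assert (Hbad : forall n, Bad (wd n)).
  { induction n; [exact Hb0|]. simpl. unfold step.
    destruct (excluded_middle_informative _); auto. destruct (bad_step _ IHn); tauto. }
  assert (Hlen : forall n, length (wd n) = n).
  { induction n; [reflexivity|]. simpl. unfold step.
    destruct (excluded_middle_informative _); rewrite length_app; simpl; lia. }
  assert (Hext : forall n m i, i < n -> nth i (wd n) false = nth i (wd (m + n)) false).
  { intros n m i Hi. induction m; [reflexivity|]. rewrite IHm. simpl. unfold step.
    destruct (excluded_middle_informative _); rewrite app_nth1; auto; rewrite Hlen; lia. }
  set (q := fun i => nth i (wd (S i)) false).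
  assert (Hpq : forall n, prefix q n = wd n).
  { intros n. apply list_eq_nth with false; [rewrite prefix_length, Hlen; auto|].
    intros i Hi. rewrite prefix_length in Hi. rewrite prefix_nth by auto. unfold q.
    replace n with ((n - S i) + S i) by lia. rewrite <- Hext by lia. reflexivity. }
  exists q. split; [|intros n; rewrite Hpq; auto].
  intros n. destruct (Hbad n 0) as [q' [Hq' [Hp _]]]. rewrite Hpq, <- Hp, Hlen. apply Hq'.
Qed.

Lemma koenig : exists L, forall q, paths T q -> good q L.
Proof.
  apply NNPP. intros Hn.
  destruct bad_branch as [q [Hq Hbad]].
  { intros L. apply NNPP. intros H1. apply Hn. exists L. intros q Hq. apply NNPP. intros Hg.
    apply H1. exists q. auto. }
  destruct (good_paths q Hq) as [L HL].
  destruct (Hbad L L) as [q' [Hq' [Hp Hng]]]. apply Hng. rewrite prefix_length in Hp.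
  apply good_local with q; auto. intros i Hi. apply (prefix_agree q q' L false); auto.
Qed.
End Koenig.

Open Scope R_scope.

Lemma Rabs_le_between x b : Rabs x <= b -> - b <= x <= b.
Proof. intros H. destruct (Rcase_abs x); [rewrite Rabs_left in H|rewrite Rabs_right in H]; lra. Qed.

Lemma half_pow_le i j : (i <= j)%nat -> (/2) ^ j <= (/2) ^ i.
Proof.
  intros H. replace j with (i + (j - i))%nat by lia. rewrite pow_add.
  pose proof (half_pow_pos i). pose proof (pow_incr (/2) 1 (j - i) ltac:(lra)).
  rewrite pow1 in H1. nra.
Qed.

Lemma close_test_complete (d : R) (u v k : nat) :
  Rabs (d - INR u / (INR v + 1)) <= (/2) ^ k -> d <= (/2) ^ k -> (u * 2 ^ k <= 3 * S v)%nat.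
Proof.
  intros Ha Hd. apply Rabs_le_between in Ha.
  assert (Hv : 0 < INR v + 1) by (pose proof (pos_INR v); lra).
  assert (Hu : INR u <= 2 * (/2) ^ k * (INR v + 1)).
  { apply Rmult_le_reg_r with (/ (INR v + 1)); [apply Rinv_0_lt_compat; lra|].
    rewrite Rmult_assoc, Rinv_r by lra. unfold Rdiv in Ha. lra. }
  apply INR_le. rewrite !mult_INR, (S_INR v). replace (INR 3) with 3 by (simpl; lra).
  pose proof (half_pow_inv k). pose proof (pos_INR (2 ^ k)).
  apply Rmult_le_compat_r with (r := INR (2 ^ k)) in Hu; [|lra].
  replace (2 * (/2) ^ k * (INR v + 1) * INR (2 ^ k)) with (2 * (INR v + 1)) in Hu
    by (rewrite <- (Rmult_1_r (2 * (INR v + 1))), <- H; ring).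
  lra.
Qed.

Lemma close_test_sound (d : R) (u v k : nat) :
  Rabs (d - INR u / (INR v + 1)) <= (/2) ^ k -> (u * 2 ^ k <= 3 * S v)%nat -> d <= 4 * (/2) ^ k.
Proof.
  intros Ha Hn. apply Rabs_le_between in Ha. apply le_INR in Hn.
  rewrite !mult_INR, (S_INR v) in Hn. replace (INR 3) with 3 in Hn by (simpl; lra).
  assert (Hv : 0 < INR v + 1) by (pose proof (pos_INR v); lra).
  pose proof (half_pow_inv k). pose proof (half_pow_pos k).
  assert (Hu : INR u <= 3 * (INR v + 1) * (/2) ^ k).
  { replace (INR u) with (INR u * INR (2 ^ k) * (/2) ^ k) 
      by (rewrite Rmult_assoc, (Rmult_comm (INR (2 ^ k))), H; ring).
    apply Rmult_le_compat_r; lra. }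
  assert (INR u / (INR v + 1) <= 3 * (/2) ^ k).
  { unfold Rdiv. apply Rmult_le_reg_r with (INR v + 1); [lra|].
    rewrite Rmult_assoc, Rinv_l by lra. lra. }
  lra.
Qed.

Lemma cauchy_name_bound (M : cmetric) (p : baire) (y : cm_carrier M) :
  (forall x y z, cm_d M x z <= cm_d M x y + cm_d M y z) ->
  delta (cauchy_space M) p y -> forall m, cm_d M (cm_alpha M (p m)) y <= (/2) ^ m.
Proof.
  intros Htri [Hc Hl] m. apply Rle_plus_epsilon. intros eps Heps.
  destruct (Hl eps Heps) as [N HN].
  specialize (HN (S (N + m)) ltac:(lia)). specialize (Hc m (S (N + m)) ltac:(lia)).
  pose proof (Htri (cm_alpha M (p m)) (cm_alpha M (p (S (N + m)))) y). lra.
Qed.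

Lemma fast_approximations_name (M : cmetric) (a : baire) (y : cm_carrier M) :
  (forall x y z, cm_d M x z <= cm_d M x y + cm_d M y z) ->
  (forall x y, cm_d M x y = cm_d M y x) ->
  (forall n, cm_d M (cm_alpha M (a n)) y <= /2 * (/2) ^ n) ->
  delta (cauchy_space M) a y.
Proof.
  intros Htri Hsym Hb. split.
  - intros i j Hij. pose proof (Hb i). pose proof (Hb j).
    pose proof (Htri (cm_alpha M (a i)) y (cm_alpha M (a j))).
    rewrite (Hsym y) in H1. pose proof (half_pow_le i j ltac:(lia)). lra.
  - intros eps Heps.
    destruct (pow_lt_1_zero (/2) ltac:(rewrite Rabs_right; lra) eps Heps) as [N HN].
    exists N. intros n Hn. pose proof (Hb n). specialize (HN n Hn).
    rewrite Rabs_right in HN by (apply Rle_ge, pow_le; lra). pose proof (half_pow_pos n). lra.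
Qed.

Open Scope nat_scope.

Lemma div2_lt t K : t < K + K -> Nat.div2 t < K.
Proof. intros. rewrite Nat.div2_div. apply Nat.Div0.div_lt_upper_bound; lia. Qed.

Lemma prefix_bpair_local (p : baire) q1 q2 L k : (forall i, i < L -> q1 i = q2 i) -> k <= L + L ->
  prefix (bpair p q1) k = prefix (bpair p q2) k.
Proof.
  intros H Hk. apply prefix_ext. intros t Ht. unfold bpair.
  destruct (Nat.even t); auto. apply H, div2_lt. lia.
Qed.

Definition digits (j : nat) : baire := fun i => digit i j.

Lemma digits_word_of q L j : prefix q L = word_of j L -> forall i, i < L -> digits j i = bit (q i).
Proof.
  intros Hp i Hi. unfold digits. rewrite (digit_word_of i j L Hi), <- Hp, prefix_nth by auto.
  reflexivity.
Qed.

Section OnName.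
Variables (eH : recf) (U1 U2 : list nat -> nat) (p : baire).

Lemma pair_prefix_eq K j k : k <= K + K ->
  pair_prefix (code (prefix p K)) j k = code (prefix (bpair p (digits j)) k).
Proof.
  intros Hk. rewrite pair_prefix_code. unfold prefix at 2. f_equal. apply map_ext_in.
  intros t Ht. apply in_seq in Ht. unfold pair_entry, bpair.
  rewrite par_spec, <- Nat.negb_odd. destruct (Nat.odd t); [reflexivity|].
  rewrite nthc_code. apply prefix_nth, div2_lt. lia.
Qed.

Lemma answer_on_prefix K n s L j : L <= K ->
  answer eH (code (prefix p K)) n s L j
  = first_nz (S (L + L)) (fun k => run eH s [npair (n + 5) (code (prefix (bpair p (digits j)) k))] - 1).
Proof.
  intros HL. unfold answer. apply first_nz_ext. intros k Hk. rewrite pair_prefix_eq by lia. reflexivity.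
Qed.

Lemma answer_sound K n s L j a : L <= K -> answer eH (code (prefix p K)) n s L j = S a ->
  exists k, k <= L + L /\ eval eH [npair (n + 5) (code (prefix (bpair p (digits j)) k))] (S a).
Proof.
  intros HL Ha. rewrite answer_on_prefix in Ha by exact HL.
  destruct (first_nz_spec (S (L + L))
              (fun k => run eH s [npair (n + 5) (code (prefix (bpair p (digits j)) k))] - 1))
    as [[E _]|[k [Hk [E _]]]]; [congruence|].
  exists k. split; [lia|]. apply (run_sound _ s).
  rewrite Ha in E. cbv beta in E. revert E. generalize (run eH s [npair (n + 5)
    (code (prefix (bpair p (digits j)) k))]). intros. lia.
Qed.

Lemma answer_complete n L j k a : k <= L + L ->
  eval eH [npair (n + 5) (code (prefix (bpair p (digits j)) k))] (S a) ->
  exists s0, forall K s, L <= K -> s0 <= s -> answer eH (code (prefix p K)) n s L j <> 0.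
Proof.
  intros Hk Hev. destruct (run_complete _ _ _ Hev) as [s0 Hs0].
  exists s0. intros K s HL Hs. rewrite answer_on_prefix by exact HL.
  apply first_nz_witness with k; [lia|]. rewrite Hs0 by exact Hs. discriminate.
Qed.

Lemma stage_on_prefix K K' n s : s < K -> s < K' ->
  stage eH U1 U2 (code (prefix p K)) n s = stage eH U1 U2 (code (prefix p K')) n s.
Proof.
  intros HK HK'.
  assert (Hans : forall L j, L <= s ->
            answer eH (code (prefix p K)) n s L j = answer eH (code (prefix p K')) n s L j).
  { intros L j HL. rewrite !answer_on_prefix by lia. reflexivity. }
  generalize dependent (code (prefix p K')). generalize dependent (code (prefix p K)).
  intros c c' Hans. unfold stage. apply first_nz_ext. intros L HL. apply first_nz_ext. intros j _.
  assert (Hsupp : support eH U1 U2 c n s L j = support eH U1 U2 c' n s L j).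
  { unfold support. apply sum_below_ext. intros i _. rewrite !(Hans L) by lia. reflexivity. }
  unfold accept. rewrite Hsupp, (Hans L j) by lia. reflexivity.
Qed.

Definition stage_at n s := stage eH U1 U2 (code (prefix p (S s))) n s.

Lemma search_on_prefix K n :
  search eH U1 U2 (npair n (code (prefix p K))) = first_nz K (stage_at n).
Proof.
  unfold search. rewrite sndp_npair, fstp_npair, lenc_code, prefix_length.
  apply first_nz_ext. intros s Hs. unfold stage_at. apply stage_on_prefix; lia.
Qed.
End OnName.

Section Correctness.
Variables (eH : recf) (U1 U2 : list nat -> nat) (M : cmetric) (fx : cm_carrier M) (p : baire)
  (T : tree) (r : R).
Hypothesis Htri : forall x y z, (cm_d M x z <= cm_d M x y + cm_d M y z)%R.
Hypothesis Hsym : forall x y, cm_d M x y = cm_d M y x.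
Hypothesis Happ : forall i j k,
  (Rabs (cm_d M (cm_alpha M i) (cm_alpha M j) - INR (U1 [i; j; k]) / (INR (U2 [i; j; k]) + 1))
   <= (/2) ^ k)%R.
Hypothesis Hr : (/2 < r)%R.
Hypothesis Hm : measure_ge (paths T) r.
Hypothesis HQ : forall q, paths T q -> exists rq,
  delta (cauchy_space M) rq fx /\ machine_computes eH (bpair p (fun i => bit (q i))) rq.

Lemma close_01 a b k : close U1 U2 a b k = 0 \/ close U1 U2 a b k = 1.
Proof. unfold close. destruct (_ <=? _); auto. Qed.

Lemma close_complete a b k :
  (cm_d M (cm_alpha M a) (cm_alpha M b) <= (/2) ^ k)%R -> close U1 U2 a b k = 1.
Proof.
  intros H. unfold close.
  rewrite (proj2 (Nat.leb_le _ _)); [reflexivity|]. eapply close_test_complete; eauto.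
Qed.

Lemma close_sound a b k :
  close U1 U2 a b k = 1 -> (cm_d M (cm_alpha M a) (cm_alpha M b) <= 4 * (/2) ^ k)%R.
Proof.
  unfold close. destruct (_ <=? _) eqn:E; [|discriminate]. intros _.
  apply Nat.leb_le in E. eapply close_test_sound; eauto.
Qed.

Lemma answer_on_path K n s L j a q : L <= K -> paths T q -> prefix q L = word_of j L ->
  answer eH (code (prefix p K)) n s L j = S a ->
  (cm_d M (cm_alpha M a) fx <= (/2) ^ (n + 5))%R.
Proof.
  intros HL Hq Hp Ha. destruct (answer_sound eH p K n s L j a HL Ha) as [k [Hk Hev]].
  rewrite (prefix_bpair_local p (digits j) (fun i => bit (q i)) L k) in Hev
    by (exact (digits_word_of q L j Hp) || exact Hk).
  destruct (HQ q Hq) as [rq [Hd Hmc]].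
  destruct (Hmc (n + 5)) as [_ Hu]. apply Hu in Hev. subst a.
  apply cauchy_name_bound; auto.
Qed.

(** An accepted answer is within [2^-(n+1)] of [fx]: its majority meets a
    word extended by a path of [T], whose answer is within [2^-(n+5)]. *)
Lemma stage_sound n s a : stage_at eH U1 U2 p n s = S a ->
  (cm_d M (cm_alpha M a) fx <= /2 * (/2) ^ n)%R.
Proof.
  set (c := code (prefix p (S s))). intros Hs. unfold stage_at, stage in Hs. fold c in Hs.
  destruct (first_nz_spec (S s) (fun L => first_nz (2 ^ L) (fun j => accept eH U1 U2 c n s L j)))
    as [[E _]|[L [HL [E1 _]]]]; [congruence|]. rewrite Hs in E1.
  destruct (first_nz_spec (2 ^ L) (fun j => accept eH U1 U2 c n s L j))
    as [[E _]|[j [Hj [E2 _]]]]; [congruence|]. rewrite <- E1 in E2.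
  unfold accept in E2.
  destruct (answer eH c n s L j =? 0); [discriminate|].
  destruct (S (2 ^ L) <=? _) eqn:Emaj; [|discriminate]. apply Nat.leb_le in Emaj.
  set (B := fun i => andb (negb (answer eH c n s L i =? 0))
                         (close U1 U2 (pred (answer eH c n s L i)) a (n + 4) =? 1)).
  assert (Hsupp : support eH U1 U2 c n s L j = sum_below (2 ^ L) (fun i => ind (B i))).
  { unfold support. apply sum_below_ext. intros i _. unfold B, ind. rewrite <- E2.
    destruct (answer eH c n s L i =? 0); [reflexivity|].
    change (pred (S a)) with a.
    destruct (close_01 (pred (answer eH c n s L i)) a (n + 4)) as [E|E]; rewrite E; reflexivity. }
  destruct (majority_meets_paths T r Hr Hm B L ltac:(lia)) as [i [q [Hi [HB [Hq Hp]]]]].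
  unfold B in HB. apply andb_prop in HB as [HB1 HB2].
  apply Nat.eqb_eq in HB2. apply Bool.negb_true_iff, Nat.eqb_neq in HB1.
  destruct (answer eH c n s L i) as [|ai] eqn:Ei; [congruence|].
  pose proof (answer_on_path (S s) n s L i ai q ltac:(lia) Hq Hp Ei) as Hai.
  apply close_sound in HB2. rewrite Hsym in HB2.
  pose proof (Htri (cm_alpha M a) (cm_alpha M ai) fx).
  rewrite pow_add in Hai, HB2. pose proof (half_pow_pos n).
  simpl in Hai, HB2. lra.
Qed.

(** By Koenig's lemma, one level [L] suffices for [eH] to answer on every
    path of [T] after reading at most [2L] entries of [<p, q>]. *)
Lemma uniform_answer_level n : exists L, forall q, paths T q -> exists k a, k <= L + L /\
  eval eH [npair (n + 5) (code (prefix (bpair p (fun i => bit (q i))) k))] (S a).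
Proof.
  apply (koenig T (fun q L => exists k a, k <= L + L /\
            eval eH [npair (n + 5) (code (prefix (bpair p (fun i => bit (q i))) k))] (S a))).
  - intros q L L' [k [a [Hk Ha]]] HL'. exists k, a. split; [lia|exact Ha].
  - intros q q' L Hqq [k [a [Hk Ha]]]. exists k, a. split; [exact Hk|].
    rewrite <- (prefix_bpair_local p (fun i => bit (q i)) (fun i => bit (q' i)) L k);
      [exact Ha| |exact Hk].
    intros i Hi. rewrite Hqq; auto.
  - intros q Hq. destruct (HQ q Hq) as [rq [_ Hmc]]. destruct (Hmc (n + 5)) as [[k Hk] _].
    exists k, k, (rq (n + 5)). split; [lia|exact Hk].
Qed.

Lemma tree_words_answered n L :
  (forall q, paths T q -> exists k a, k <= L + L /\
     eval eH [npair (n + 5) (code (prefix (bpair p (fun i => bit (q i))) k))] (S a)) ->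
  exists s0, forall K s, L <= K -> s0 <= s -> forall j, j < 2 ^ L -> meets_tree T j L = true ->
    answer eH (code (prefix p K)) n s L j <> 0.
Proof.
  intros HL.
  destruct (eventually_all (2 ^ L) (fun j s => forall K, L <= K -> meets_tree T j L = true ->
              answer eH (code (prefix p K)) n s L j <> 0)) as [s0 Hs0].
  - intros j _. destruct (meets_tree T j L) eqn:Ej; [|exists 0; intros; discriminate].
    destruct (meets_tree_spec T j L Ej) as [q [Hq Hp]].
    destruct (HL q Hq) as [k [a [Hk Ha]]].
    rewrite <- (prefix_bpair_local p (digits j) (fun i => bit (q i)) L k) in Ha
      by (exact (digits_word_of q L j Hp) || exact Hk).
    destruct (answer_complete eH p n L j k a Hk Ha) as [s0 Hs0].
    exists s0. intros s Hs K HK _. apply Hs0; assumption.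
  - exists s0. intros K s HK Hs j Hj Ej. apply Hs0; assumption.
Qed.

(** The search terminates: at a uniform level, the words met by [T] form an
    accepted majority, their answers being pairwise close. *)
Lemma stage_succeeds n : exists s, stage_at eH U1 U2 p n s <> 0.
Proof.
  destruct (uniform_answer_level n) as [L HL].
  destruct (tree_words_answered n L HL) as [s0 Hs0].
  set (s := L + s0). set (c := code (prefix p (S s))).
  assert (Hans : forall j, j < 2 ^ L -> meets_tree T j L = true ->
                   exists a, answer eH c n s L j = S a /\
                             (cm_d M (cm_alpha M a) fx <= (/2) ^ (n + 5))%R).
  { intros j Hj Ej. destruct (answer eH c n s L j) as [|a] eqn:Ea.
    - exfalso. revert Ea. apply Hs0; [unfold s; lia|unfold s; lia|exact Hj|exact Ej].
    - exists a. split; [reflexivity|]. destruct (meets_tree_spec T j L Ej) as [q [Hq Hp]].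
      apply (answer_on_path (S s) n s L j a q); auto. unfold s; lia. }
  pose proof (meets_tree_majority T r Hr Hm L) as Hmaj.
  destruct (sum_below_pos (2 ^ L) (fun j => ind (meets_tree T j L)) ltac:(lia)) as [j0 [Hj0 Ej0]].
  assert (Ej0' : meets_tree T j0 L = true) by (destruct (meets_tree T j0 L); auto).
  destruct (Hans j0 Hj0 Ej0') as [a0 [Ha0 Hd0]].
  assert (Hsupp : sum_below (2 ^ L) (fun j => ind (meets_tree T j L)) <= support eH U1 U2 c n s L j0).
  { unfold support. apply sum_below_le. intros i Hi. unfold ind.
    destruct (meets_tree T i L) eqn:Ei; [|lia].
    destruct (Hans i Hi Ei) as [ai [Hai Hdi]]. rewrite Hai, Ha0. cbn [Nat.eqb pred].
    rewrite close_complete; [lia|].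
    pose proof (Htri (cm_alpha M ai) fx (cm_alpha M a0)). rewrite (Hsym fx) in H.
    rewrite pow_add in Hdi, Hd0 |- *. simpl in Hdi, Hd0 |- *. pose proof (half_pow_pos n). lra. }
  exists s. unfold stage_at, stage. fold c.
  apply first_nz_witness with L; [unfold s; lia|].
  apply first_nz_witness with j0; [exact Hj0|].
  unfold accept. rewrite Ha0. cbn [Nat.eqb].
  rewrite (proj2 (Nat.leb_le _ _)) by lia. discriminate.
Qed.
End Correctness.

Section MajorityVote.
Variables (X : rep_space) (M : cmetric) (f : carrier X -> cm_carrier M).
Variables (eH e1 e2 : recf) (U1 U2 : list nat -> nat).
Hypothesis Htri : forall x y z, (cm_d M x z <= cm_d M x y + cm_d M y z)%R.
Hypothesis Hsym : forall x y, cm_d M x y = cm_d M y x.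
Hypothesis Happ : forall i j k,
  (Rabs (cm_d M (cm_alpha M i) (cm_alpha M j) - INR (U1 [i; j; k]) / (INR (U2 [i; j; k]) + 1))
   <= (/2) ^ k)%R.
Hypothesis HU1 : forall l, length l = 3 -> eval e1 l (U1 l).
Hypothesis HU2 : forall l, length l = 3 -> eval e2 l (U2 l).
Hypothesis Hnames : forall p x, delta X p x -> exists (T : tree) (r : R),
  (/2 < r)%R /\ measure_ge (paths T) r /\
  forall q, paths T q -> exists rq,
    delta (cauchy_space M) rq (f x) /\ machine_computes eH (bpair p (fun i => bit (q i))) rq.

Definition search_value (p : baire) (n : nat) : nat :=
  match excluded_middle_informative (exists s, stage_at eH U1 U2 p n s <> 0) with
  | left h => pred (first_nz (S (proj1_sig (constructive_indefinite_description _ h)))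
                             (stage_at eH U1 U2 p n))
  | right _ => 0
  end.

Lemma search_value_found p x : delta X p x -> forall n,
  exists s, first_nz (S s) (stage_at eH U1 U2 p n) = S (search_value p n).
Proof.
  intros Hpx n. unfold search_value. destruct (excluded_middle_informative _) as [h|h].
  - destruct (constructive_indefinite_description _ h) as [s Hs]. simpl. exists s.
    destruct (first_nz (S s) _) eqn:E; [|reflexivity].
    exfalso. revert E. apply first_nz_witness with s; auto.
  - exfalso. apply h. destruct (Hnames p x Hpx) as [T [r [Hr [Hm HQ]]]].
    eapply stage_succeeds; eauto.
Qed.

Lemma search_value_close p x : delta X p x -> forall n,
  (cm_d M (cm_alpha M (search_value p n)) (f x) <= /2 * (/2) ^ n)%R.
Proof.
  intros Hpx n. destruct (search_value_found p x Hpx n) as [s Hs].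
  destruct (first_nz_spec (S s) (stage_at eH U1 U2 p n)) as [[E _]|[t [_ [E _]]]]; [congruence|].
  destruct (Hnames p x Hpx) as [T [r [Hr [Hm HQ]]]].
  apply (stage_sound eH U1 U2 M (f x) p T r Htri Hsym Happ Hr Hm HQ n t). congruence.
Qed.

Lemma search_machine p x :
  delta X p x -> machine_computes (comp 1 (Search eH e1 e2 U1 U2)) p (search_value p).
Proof.
  intros Hpx n. destruct (search_value_found p x Hpx n) as [s Hs].
  pose proof (fun K => search_eval eH e1 e2 U1 U2 HU1 HU2 (npair n (code (prefix p K)))) as Hev.
  split.
  - exists (S s). specialize (Hev (S s)). rewrite search_on_prefix, Hs in Hev. exact Hev.
  - intros K v HK. specialize (Hev K). rewrite search_on_prefix in Hev.
    pose proof (eval_det _ _ _ HK _ Hev) as E.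
    rewrite first_nz_stable with (B' := S s) in E; [congruence|congruence|congruence].
Qed.

Lemma majority_vote_computable : computable (sv_mv (X := X) (Y := cauchy_space M) f).
Proof.
  exists {| pdom := fun p => exists x, delta X p x; pval := search_value |}. split.
  - exists (comp 1 (Search eH e1 e2 U1 U2)). intros p [x Hpx]. exact (search_machine p x Hpx).
  - intros p x Hpx _. split; [exists x; exact Hpx|]. exists (f x). split; [|reflexivity].
    apply fast_approximations_name; auto. exact (search_value_close p x Hpx).
Qed.
End MajorityVote.

Section Realizers.
Variables (Z : rep_space) (Mv : mvfun Z Cantor).
Hypothesis HZ : is_rep_space Z.

Lemma output_name_exists (r : baire) : exists q : baire,
  forall z, delta Z r z -> mvdom Mv z -> exists y, delta Cantor q y /\ Mv z y.
Proof.
  destruct (classic (exists z, delta Z r z /\ mvdom Mv z)) as [[z [Hz [y Hy]]]|Hn].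
  - exists (fun i => bit (y i)). intros z' Hz' _. destruct HZ as [Hsv _].
    rewrite <- (Hsv _ _ _ Hz Hz'). exists y. split; auto. intros n; reflexivity.
  - exists (fun _ => 0). intros z Hz Hd. exfalso. apply Hn. eauto.
Qed.

Lemma realizer_with_value (r0 v0 : baire) :
  (forall z, delta Z r0 z -> mvdom Mv z -> exists y, delta Cantor v0 y /\ Mv z y) ->
  exists G : pfun, realizer G Mv /\
    (forall r, pdom G r -> exists z, delta Z r z /\ mvdom Mv z) /\ pval G r0 = v0.
Proof.
  intros Hv0.
  set (choose := fun r => proj1_sig (constructive_indefinite_description _ (output_name_exists r))).
  exists {| pdom := fun r => exists z, delta Z r z /\ mvdom Mv z;
            pval := fun r => if excluded_middle_informative (r = r0) then v0 else choose r |}.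
  split; [|split]; cbn [pdom pval].
  - intros r z Hz Hd. cbn [pdom pval]. split; [exists z; auto|].
    destruct (excluded_middle_informative (r = r0)).
    + subst. apply Hv0; auto.
    + unfold choose. destruct (constructive_indefinite_description _ _) as [q Hq]. apply Hq; auto.
  - auto.
  - destruct (excluded_middle_informative (r0 = r0)); congruence.
Qed.
End Realizers.

Lemma reduction_yields_tree (X Y Z : rep_space) (f : carrier X -> carrier Y) (g : mvfun Z Tr)
  (H K : pfun) (eH : recf) :
  is_rep_space Z ->
  (forall p, pdom H p -> machine_computes eH p (pval H p)) ->
  (forall G : pfun, realizer G (mvcomp WWKL_half g) ->
     realizer {| pdom := fun p => pdom K p /\ pdom G (pval K p) /\
                                  pdom H (bpair p (pval G (pval K p)));
                 pval := fun p => pval H (bpair p (pval G (pval K p))) |} (sv_mv f)) ->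
  forall p x, delta X p x -> exists (T : tree) (r : R),
    (/2 < r)%R /\ measure_ge (paths T) r /\
    forall q, paths T q -> exists rq, delta Y rq (f x) /\
                                      machine_computes eH (bpair p (fun i => bit (q i))) rq.
Proof.
  intros HZ HeH Hred p x Hpx.
  set (Mv := mvcomp WWKL_half g).
  assert (Hfx : mvdom (sv_mv f) x) by (exists (f x); reflexivity).
  destruct (output_name_exists Z Mv HZ (pval K p)) as [v0 Hv0].
  destruct (realizer_with_value Z Mv HZ _ _ Hv0) as [G0 [HG0 [HG0dom _]]].
  destruct (Hred G0 HG0 p x Hpx Hfx) as [[_ [HGp _]] _].
  destruct (HG0dom _ HGp) as [z [Hz [y0 [[T [HgT [Hmeas _]]] Hgdom]]]].
  destruct Hmeas as [r [Hr Hm]].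
  exists T, r. split; [exact Hr|]. split; [exact Hm|].
  intros q Hq.
  assert (Hzq : Mv z q) by (split; [exists T; split; [|split; [exists r|]]; auto|exact Hgdom]).
  destruct (realizer_with_value Z Mv HZ (pval K p) (fun i => bit (q i))) as [G [HG [_ HGv]]].
  { intros z' Hz' _. destruct HZ as [Hsv _]. rewrite <- (Hsv _ _ _ Hz Hz').
    exists q. split; [intros n; reflexivity|exact Hzq]. }
  destruct (Hred G HG p x Hpx Hfx) as [[_ [_ HHd]] [y [Hy Hyf]]].
  cbn [pval pdom] in *. rewrite HGv in HHd, Hy. unfold sv_mv in Hyf. subst y.
  exists (pval H (bpair p (fun i => bit (q i)))). split; [exact Hy|]. apply HeH. exact HHd.
Qed.

Lemma total_recf_graph (e : recf) : (forall i j k, exists u, eval e [i; j; k] u) ->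
  exists U : list nat -> nat, forall l, length l = 3 -> eval e l (U l).
Proof.
  intros He.
  exists (fun l => proj1_sig (constructive_indefinite_description _
                                (He (nth 0 l 0) (nth 1 l 0) (nth 2 l 0)))).
  intros l Hl. destruct (constructive_indefinite_description _ _) as [u Hu]. simpl.
  destruct l as [|a [|b [|c [|? ?]]]]; simpl in *; try lia. exact Hu.
Qed.

Theorem theorem13p2 (X : rep_space) (M : cmetric)
  (f : carrier X -> carrier (cauchy_space M)) :
  is_rep_space X ->
  is_computable_metric_space M ->
  (exists (Z : rep_space) (g : mvfun Z Tr),
      is_rep_space Z /\ weihrauch_le (sv_mv f) (mvcomp WWKL_half g)) ->
  computable (sv_mv (X := X) (Y := cauchy_space M) f).
Proof.
  intros _ HM [Z [g [HZ [H [K [[eH HeH] [_ Hred]]]]]]].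
  destruct HM as [_ [_ [Hsym [Htri [_ [e1 [e2 Happ]]]]]]].
  destruct (total_recf_graph e1) as [U1 HU1].
  { intros i j k. destruct (Happ i j k) as [u [v [Hu _]]]. eauto. }
  destruct (total_recf_graph e2) as [U2 HU2].
  { intros i j k. destruct (Happ i j k) as [u [v [_ [Hv _]]]]. eauto. }
  apply (majority_vote_computable X M f eH e1 e2 U1 U2 Htri Hsym); auto.
  - intros i j k. destruct (Happ i j k) as [u [v [Hu [Hv Hb]]]].
    rewrite <- (eval_det _ _ _ Hu _ (HU1 [i; j; k] eq_refl)),
            <- (eval_det _ _ _ Hv _ (HU2 [i; j; k] eq_refl)).
    exact Hb.
  - exact (reduction_yields_tree X (cauchy_space M) Z f g H K eH HZ HeH Hred).
Qed.
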